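(* Let $V(l_1),\ldots,V(l_6)$ be six real lines in $\mathbf{P}^2$, no three of which have a point in common, and fix an affine chart $\mathbb{R}^2 \subset \mathbf{P}^2(\mathbb{R})$ (with $\mathbb{C}^2 \subset \mathbf{P}^2(\mathbb{C})$) such that none of the six lines is the line at infinity. Then there is a union $E \subset \mathbb{R}^2$ of finitely many $1$-dimensional linear subspaces with the following property. For every $b \in \mathbb{R}^2 \setminus E$ and every differentiable map $\gamma_0\colon \mathbb{R}/\mathbb{Z} \to \mathbb{R}^2$ whose image meets the real branch locus $V(l_1\cdots l_6)(\mathbb{R})$ only in the points $\gamma_0(\overline{t}_1),\ldots,\gamma_0(\overline{t}_n)$ ($n \in\{3,4,5\}$), each of which is a double point of the arrangement (a point on exactly two of the lines), the spheroid $\alpha'\colon S^2 \to \mathbf{P}^2(\mathbb{C})$ defined below meets the branch locus $V(l_1\cdots l_6)$ only in the images of the points $(\overline{t}_i, 0)$, $i=1,\ldots,n$, i.e. only in the three to five real points $\gamma_0(\overline{t}_i)$. Construction of $\alpha'$: let $\gamma'\colon (\mathbb{R}/\mathbb{Z}) \times \mathbb{R} \to \mathbb{C}^2 \subset \mathbf{P}^2(\mathbb{C})$, $(t,u) \mapsto \gamma_0(t) + \mathrm{i}\,u b$. The limits $\lim_{u\to\pm\infty}\gamma'(t,u)$ exist in $\mathbf{P}^2(\mathbb{C})$ and are independent of $t$ (both equal the point at infinity in direction $b$), so $\gamma'$ induces a continuous map $\alpha'$ from $(\mathbb{R}/\mathbb{Z}) \times [-\infty,\infty]$ with $(\mathbb{R}/\mathbb{Z})\times\{\infty\}$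 and $(\mathbb{R}/\mathbb{Z})\times\{-\infty\}$ each collapsed to a point, which is the suspension $S(S^1) \cong S^2$. *)

From Stdlib Require Import Reals Lra.
From Coquelicot Require Import Coquelicot.
Open Scope R_scope.

(* A line arrangement of six real lines l_i = a i * X + b i * Y + c i * Z,
   indexed by i < 6 (homogeneous coordinates [X:Y:Z], affine chart Z = 1). *)
Record arrangement := mkArr { la : nat -> R; lb : nat -> R; lc : nat -> R }.

Definition lformC (A : arrangement) (i : nat) (X Y Z : C) : C :=
  (RtoC (la A i) * X + RtoC (lb A i) * Y + RtoC (lc A i) * Z)%C.

Definition lformR (A : arrangement) (i : nat) (x y : R) : R :=
  la A i * x + lb A i * y + lc A i.

Definition not_at_infinity (A : arrangement) : Prop :=
  forall i, (i < 6)%nat -> ~ (la A i = 0 /\ lb A i = 0).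

Definition no_three_concurrent (A : arrangement) : Prop :=
  forall i j k, (i < 6)%nat -> (j < 6)%nat -> (k < 6)%nat ->
    i <> j -> j <> k -> i <> k ->
    forall X Y Z : C, ~ (X = RtoC 0 /\ Y = RtoC 0 /\ Z = RtoC 0) ->
      ~ (lformC A i X Y Z = RtoC 0 /\ lformC A j X Y Z = RtoC 0 /\ lformC A k X Y Z = RtoC 0).

Definition on_real_locus (A : arrangement) (x y : R) : Prop :=
  exists i, (i < 6)%nat /\ lformR A i x y = 0.

Definition on_locus (A : arrangement) (X Y Z : C) : Prop :=
  exists i, (i < 6)%nat /\ lformC A i X Y Z = RtoC 0.

Definition double_point (A : arrangement) (x y : R) : Prop :=
  exists j k, (j < 6)%nat /\ (k < 6)%nat /\ j <> k /\
    lformR A j x y = 0 /\ lformR A k x y = 0 /\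
    forall m, (m < 6)%nat -> lformR A m x y = 0 -> m = j \/ m = k.

(* E = finite union of the 1-dimensional linear subspaces spanned by the
   (nonzero) vectors in the list dirs *)
Definition in_union_of_lines (dirs : list (R * R)) (p : R * R) : Prop :=
  exists v, List.In v dirs /\ exists s : R, p = (s * fst v, s * snd v).

Definition gamma' (g1 g2 : R -> R) (b : R * R) (t u : R) : C * C :=
  ((RtoC (g1 t) + Ci * RtoC (u * fst b))%C, (RtoC (g2 t) + Ci * RtoC (u * snd b))%C).

From Stdlib Require Import Reals Lra Lia Psatz List.
From Coquelicot Require Import Coquelicot.
Open Scope R_scope.

(* Write l_i = L_i + c_i with L_i the linear part, and take for E the six
   lines ker L_i through the origin, i.e. the parallels to the V(l_i).  For b
   outside E, [b : 0] lies on no V(l_i) because l_i [b : 0] = L_i(b) <> 0, and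
   l_i(gamma0(t) + i u b) = l_i(gamma0(t)) + i u L_i(b) has nonzero imaginary
   part unless u = 0, which leaves only the real points gamma0(t) on the real
   locus. *)

Definition linear_part (A : arrangement) (i : nat) (v : R * R) : R :=
  la A i * fst v + lb A i * snd v.

Definition parallel_dirs (A : arrangement) : list (R * R) :=
  map (fun i => (- lb A i, la A i)) (seq 0 6).

Lemma kernel_of_nonzero_form (a c b1 b2 : R) :
  ~ (a = 0 /\ c = 0) -> a * b1 + c * b2 = 0 ->
  exists s : R, (b1, b2) = (s * - c, s * a).
Proof.
  intros Hac Hb.
  assert (Hn : a * a + c * c <> 0) by (intro; apply Hac; split; nra).
  exists ((a * b2 - c * b1) / (a * a + c * c)).
  f_equal; field_simplify_eq; auto.
  - assert (a * (a * b1 + c * b2) = 0) by (rewrite Hb; ring); lra.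
  - assert (c * (a * b1 + c * b2) = 0) by (rewrite Hb; ring); lra.
Qed.

Lemma parallel_dirs_neq0 (A : arrangement) :
  not_at_infinity A -> forall v, In v (parallel_dirs A) -> v <> (0, 0).
Proof.
  intros Hinf v Hv E.
  apply in_map_iff in Hv as [i [<- Hi]]; apply in_seq in Hi.
  injection E; intros; apply (Hinf i); [lia | split; lra].
Qed.

Lemma linear_part_neq0 (A : arrangement) (b : R * R) (i : nat) :
  not_at_infinity A -> (i < 6)%nat ->
  ~ in_union_of_lines (parallel_dirs A) b -> linear_part A i b <> 0.
Proof.
  intros Hinf Hi Hb E; apply Hb.
  exists (- lb A i, la A i); split.
  - apply in_map_iff; exists i; split; [reflexivity | apply in_seq; lia].
  - destruct b as [b1 b2].
    exact (kernel_of_nonzero_form _ _ b1 b2 (Hinf i Hi) E).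
Qed.

Lemma lformC_at_infinity (A : arrangement) (i : nat) (b : R * R) :
  lformC A i (RtoC (fst b)) (RtoC (snd b)) (RtoC 0) = RtoC (linear_part A i b).
Proof.
  unfold lformC, linear_part, RtoC, Cplus, Cmult.
  apply injective_projections; simpl; ring.
Qed.

Lemma lformC_gamma' (A : arrangement) (i : nat) g1 g2 b t u :
  lformC A i (fst (gamma' g1 g2 b t u)) (snd (gamma' g1 g2 b t u)) (RtoC 1) =
  (lformR A i (g1 t) (g2 t), u * linear_part A i b).
Proof.
  unfold lformC, lformR, linear_part, gamma', RtoC, Cplus, Cmult, Ci.
  apply injective_projections; simpl; ring.
Qed.

Lemma gamma'_at_0 g1 g2 b t :
  gamma' g1 g2 b t 0 = (RtoC (g1 t), RtoC (g2 t)).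
Proof.
  unfold gamma', RtoC, Cplus, Cmult, Ci.
  apply injective_projections; apply injective_projections; simpl; ring.
Qed.

Theorem lemma4p2 (A : arrangement)
  (Hinf : not_at_infinity A) (H3 : no_three_concurrent A) :
  exists dirs : list (R * R),
    (forall v, List.In v dirs -> v <> (0, 0)) /\
    forall b : R * R, ~ in_union_of_lines dirs b ->
    forall (g1 g2 : R -> R) (n : nat) (ts : nat -> R),
      (* gamma0 = (g1, g2) : R/Z -> R^2 differentiable *)
      derivable g1 -> derivable g2 ->
      (forall t, g1 (t + 1) = g1 t /\ g2 (t + 1) = g2 t) ->
      (3 <= n <= 5)%nat ->
      (* the points gamma0(t_k), k < n, are pairwise distinct double points *)
      (forall k l, (k < n)%nat -> (l < n)%nat -> k <> l ->
         (g1 (ts k), g2 (ts k)) <> (g1 (ts l), g2 (ts l))) ->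
      (forall k, (k < n)%nat -> double_point A (g1 (ts k)) (g2 (ts k))) ->
      (* the image of gamma0 meets the real branch locus only in these points *)
      (forall t, on_real_locus A (g1 t) (g2 t) ->
         exists k, (k < n)%nat /\ (g1 t, g2 t) = (g1 (ts k), g2 (ts k))) ->
      (* conclusion: alpha' meets V(l_1...l_6) only in the points gamma0(t_k):
         (i) the collapsed point at infinity [b1 : b2 : 0] is not on the locus *)
      ~ on_locus A (RtoC (fst b)) (RtoC (snd b)) (RtoC 0) /\
      (* (ii) the finite points gamma'(t,u) = gamma0(t) + i u b *)
      (forall t u, on_locus A (fst (gamma' g1 g2 b t u)) (snd (gamma' g1 g2 b t u)) (RtoC 1) ->
         exists k, (k < n)%nat /\
           gamma' g1 g2 b t u = (RtoC (g1 (ts k)), RtoC (g2 (ts k)))).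
Proof.
  exists (parallel_dirs A); split; [exact (parallel_dirs_neq0 A Hinf) |].
  intros b Hb g1 g2 n ts _ _ _ _ _ _ Hreal; split.
  - intros [i [Hi E]].
    rewrite lformC_at_infinity in E; apply RtoC_inj in E.
    exact (linear_part_neq0 A b i Hinf Hi Hb E).
  - intros t u [i [Hi E]].
    rewrite lformC_gamma' in E; injection E as Ere Eim.
    assert (Hu : u = 0).
    { apply Rmult_integral in Eim as [Hu | HL]; [exact Hu |].
      contradiction (linear_part_neq0 A b i Hinf Hi Hb HL). }
    subst u; rewrite gamma'_at_0.
    destruct (Hreal t) as [k [Hk Ek]]; [exists i; split; assumption |].
    exists k; split; [exact Hk |].
    injection Ek as E1 E2; rewrite E1, E2; reflexivity.
Qed.
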